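(* Let $n\geqslant 1$, let $B=\{g,e\}$ and let $Q$ be the set of monoid relations on $B$: (Q1) $g^n=1$; (Q2) $e^2=e$; (Q3) $eg^{n-j+i}eg^{n-i+j}=g^{n-j+i}eg^{n-i+j}e$ for $1\leqslant i<j\leqslant n$; (Q4) $g(eg^{n-1})^n=(eg^{n-1})^n$. Then $\langle B\mid Q\rangle$ is a monoid presentation of $\mathcal{CI}_n$ with respect to the map $g\mapsto g$, $e\mapsto e_1$. It has $2$ generators and $\frac12(n^2-n+6)$ relations.
   Context: Let $\Omega_n=\{1,\ldots,n\}$, $\mathcal{I}_n$ the symmetric inverse monoid on $\Omega_n$ (maps on the right, composed left to right). $g$ is the permutation $ig=i+1$ ($1\leqslant i\leqslant n-1$), $ng=1$; $\mathcal{C}_n=\{1,g,\ldots,g^{n-1}\}$; $\mathcal{CI}_n=\{\alpha\in\mathcal{I}_n\mid \alpha=\sigma|_{\mathrm{Dom}(\alpha)}\text{ for some }\sigma\in\mathcal{C}_n\}$; $e_1$ is the partial identity on $\Omega_n\setminus\{1\}$. A presentation $\langle B\mid Q\rangle$ defines a monoid $M$ via a map $\phi:B\to M$ if $\phi$ is injective, $B\phi$ generates $M$, and the induced homomorphism $B^*\to M$ has kernel equal to the smallest congruence on $B^*$ containing $Q$. *)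

From mathcomp Require Import all_boot.
From Stdlib Require List.
Set Implicit Arguments. Unset Strict Implicit. Unset Printing Implicit Defensive.

(* Omega_n = {1,...,n} is modelled by 'I_n = {0,...,n-1}; the point 1 is the
   ordinal with value 0.  A partial transformation of Omega_n is a finite
   function 'I_n -> option 'I_n (None = undefined). *)
Definition ptrans (n : nat) := {ffun 'I_n -> option 'I_n}.

(* maps act on the right, composed left to right: x (a b) = (x a) b *)
Definition pcomp n (a b : ptrans n) : ptrans n := [ffun x => obind b (a x)].
Definition pid n : ptrans n := [ffun x => Some x].

Definition gperm n (x : 'I_n) : 'I_n := ordS x.
Definition gmap n : ptrans n := [ffun x => Some (gperm x)].

Definition e1map n : ptrans n :=
  [ffun x => if val x == 0 then None else Some x].

Definition in_In n (a : ptrans n) : Prop :=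
  forall x y z, a x = Some z -> a y = Some z -> x = y.

Definition in_CIn n (a : ptrans n) : Prop :=
  in_In a /\
  exists k : nat, forall x : 'I_n, a x = None \/ a x = Some (iter k (@gperm n) x).

Inductive gen := Gg | Ge.
Definition word := seq gen.

Definition phi n (b : gen) : ptrans n :=
  match b with Gg => gmap n | Ge => e1map n end.

Fixpoint ev n (w : word) : ptrans n :=
  match w with
  | [::] => pid n
  | b :: w' => pcomp (phi n b) (ev n w')
  end.

Inductive congr (Q : seq (word * word)) : word -> word -> Prop :=
| congr_rel u x y v : List.In (x, y) Q -> congr Q (u ++ x ++ v) (u ++ y ++ v)
| congr_refl u : congr Q u u
| congr_sym u v : congr Q u v -> congr Q v u
| congr_trans u v w : congr Q u v -> congr Q v w -> congr Q u w.

Definition gpow (k : nat) : word := nseq k Gg.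

Definition Q1 n : seq (word * word) := [:: (gpow n, [::])].
Definition Q2 : seq (word * word) := [:: ([:: Ge; Ge], [:: Ge])].
Definition Q3 n : seq (word * word) :=
  [seq (Ge :: gpow (n - j + i) ++ Ge :: gpow (n - i + j),
        gpow (n - j + i) ++ Ge :: gpow (n - i + j) ++ [:: Ge])
  | j <- iota 1 n, i <- iota 1 j.-1].
Definition Q4 n : seq (word * word) :=
  let u := flatten (nseq n (Ge :: gpow (n - 1))) in [:: (Gg :: u, u)].
Definition Qrels n : seq (word * word) := Q1 n ++ Q2 ++ Q3 n ++ Q4 n.

Definition is_presentation n (Q : seq (word * word)) : Prop :=
  injective (phi n) /\
  (forall w, in_CIn (ev n w)) /\
  (forall a, in_CIn a -> exists w, ev n w = a) /\
  (forall u v, ev n u = ev n v <-> congr Q u v).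

From HB Require Import structures.
From mathcomp Require Import all_boot zify.
From Stdlib Require Import Setoid Morphisms.

Set Implicit Arguments. Unset Strict Implicit. Unset Printing Implicit Defensive.

(* An element of CI_n is determined by the set S of points where it is
   undefined and a rotation g^k, k mod n.  Reading a word letter by letter, g
   increments k while e adds to S the point that g^k sends to 1.  The words
   eps a = g^(n-a) e g^a represent the partial identities missing the single
   point a; by Q1-Q3 they are commuting idempotents, and g^k e = eps a g^k for
   the appropriate a, so every word is congruent to a normal form
   (prod_(a in S) eps a) g^k.  Normal forms with the same image have the same S
   and, unless S is everything, the same k mod n.  For S = Omega_n the product
   of all eps a is (e g^(n-1))^n, which absorbs g by Q4. *)

Definition gen_eqb (a b : gen) : bool :=
  match a, b with Gg, Gg | Ge, Ge => true | _, _ => false end.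
Lemma gen_eqP : Equality.axiom gen_eqb.
Proof. by case; case; [left | right | right | left]. Qed.
HB.instance Definition _ := hasDecEq.Build gen gen_eqP.

Lemma In_mem (T : eqType) (x : T) (s : seq T) : List.In x s <-> x \in s.
Proof.
elim: s => //= y s IH; rewrite in_cons.
by split=> [[->|/IH->]|/orP[/eqP->|/IH]]; rewrite ?eqxx ?orbT; auto.
Qed.

Lemma congr_cat Q x y u v : congr Q x y -> congr Q (u ++ x ++ v) (u ++ y ++ v).
Proof.
elim=> [u0 x0 y0 v0 H|w|w1 w2 _ IH|w1 w2 w3 _ IH1 _ IH2].
- by have := congr_rel (u ++ u0) (v0 ++ v) H; rewrite !catA.
- exact: congr_refl.
- exact: congr_sym.
- exact: congr_trans IH2.
Qed.

Lemma congr_mem Q x y : (x, y) \in Q -> congr Q x y.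
Proof. by move/In_mem/(congr_rel [::] [::]); rewrite /= !cats0. Qed.

#[global] Hint Resolve congr_refl : core.

#[global] Instance congr_equiv Q : Equivalence (congr Q).
Proof. split; [exact: congr_refl | exact: congr_sym | exact: congr_trans]. Qed.

#[global] Instance cat_congr_proper Q :
  Proper (congr Q ==> congr Q ==> congr Q) (@cat gen).
Proof.
move=> x y Hxy x' y' Hx'y'; transitivity (y ++ x').
- by have := congr_cat [::] x' Hxy.
- by have := congr_cat y [::] Hx'y'; rewrite !cats0.
Qed.

#[global] Instance cons_congr_proper Q b : Proper (congr Q ==> congr Q) (cons b).
Proof. by move=> x y H; apply: (cat_congr_proper (congr_refl Q [:: b]) H). Qed.

Lemma gpowD a b : gpow (a + b) = gpow a ++ gpow b.
Proof. exact: nseqD. Qed.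

Lemma eq_mod_addM d a b q : a = b + q * d -> a = b %[mod d].
Proof. by move=> ->; rewrite addnC modnMDl. Qed.

Lemma gperm_iter_val n k (x : 'I_n) : val (iter k (@gperm n) x) = (x + k) %% n.
Proof.
elim: k => [|k IH] /=; first by rewrite addn0 modn_small.
by rewrite IH -addn1 modnDml addn1 addnS.
Qed.

Section Presentation.
Variable m : nat.
Local Notation n := m.+1.
Local Notation C := (congr (Qrels n)).

Lemma gpow_n : C (gpow n) [::].
Proof. by apply: congr_mem; rewrite mem_head. Qed.

Lemma gpow_mod a b : a = b %[mod n] -> C (gpow a) (gpow b).
Proof.
have gpow_MD q r : C (gpow (q * n + r)) (gpow r).
  by elim: q => // q IH; rewrite mulSn -addnA gpowD gpow_n.
by move=> Hab; rewrite (divn_eq a n) (divn_eq b n) !gpow_MD Hab.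
Qed.

Lemma e_idem : C [:: Ge; Ge] [:: Ge].
Proof. by apply: congr_mem; rewrite !mem_cat /Q2 mem_head orbT. Qed.

(* The instance i = 1, j = n - d + 1 of Q3; no other instance is needed. *)
Lemma e_comm d : 0 < d < n ->
  C (Ge :: gpow d ++ Ge :: gpow (n - d)) (gpow d ++ Ge :: gpow (n - d) ++ [:: Ge]).
Proof.
move=> Hd; rewrite (@gpow_mod (n - d) (n + (n - d))); last first.
  by apply/esym/(@eq_mod_addM _ _ _ 1); lia.
apply: congr_mem; rewrite !mem_cat; apply/or4P/Or43/allpairsPdep.
exists (n - d + 1), 1.
rewrite !mem_iota (_ : n - (n - d + 1) + 1 = d) 1?(_ : n - 1 + (n - d + 1) = n + (n - d)).
all: by [split => //; lia | lia].
Qed.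

Definition eg_pow j := flatten (nseq j (Ge :: gpow (n - 1))).

Lemma g_eg_pow : C (Gg :: eg_pow n) (eg_pow n).
Proof. by apply: congr_mem; rewrite !mem_cat mem_head !orbT. Qed.

(* [eps a] evaluates to the partial identity undefined exactly at [a]. *)
Definition eps (a : 'I_n) : word := gpow (n - a) ++ Ge :: gpow a.

Lemma eps_idem a : C (eps a ++ eps a) (eps a).
Proof.
rewrite /eps -!catA /= catA -gpowD subnKC 1?ltnW // gpow_n /=.
by rewrite -[Ge :: Ge :: _]/([:: Ge; Ge] ++ _) e_idem.
Qed.

Lemma eps_comm_lt (a b : 'I_n) : b < a -> C (eps a ++ eps b) (eps b ++ eps a).
Proof.
move=> Hba; set d := a - b; have Ha := ltn_ord a.
have Hd : C (gpow a ++ gpow (n - b)) (gpow d).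
  by rewrite -gpowD; apply: gpow_mod; apply: (@eq_mod_addM _ _ _ 1); lia.
have Hb : C (gpow b) (gpow (n - d) ++ gpow a).
  by rewrite -gpowD; apply: gpow_mod; apply/esym/(@eq_mod_addM _ _ _ 1); lia.
rewrite /eps; transitivity (gpow (n - a) ++ (Ge :: gpow d ++ Ge :: gpow (n - d)) ++ gpow a).
  by rewrite -!catA /= -?catA /= [gpow a ++ _]catA Hd Hb -?catA.
rewrite e_comm; last by lia.
have -> : gpow (n - d) = gpow b ++ gpow (n - a) by rewrite -gpowD; congr gpow; lia.
have -> : gpow (n - b) = gpow (n - a) ++ gpow d by rewrite -gpowD; congr gpow; lia.
by rewrite -!catA /= -?catA /= -?catA.
Qed.

Lemma eps_comm a b : C (eps a ++ eps b) (eps b ++ eps a).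
Proof.
case: (ltngtP a b) => [Hab|Hba|/val_inj->]; last reflexivity.
- by symmetry; apply: eps_comm_lt.
- exact: eps_comm_lt.
Qed.

Definition eps_seq (l : seq 'I_n) : word := flatten (map eps l).
Arguments eps_seq : simpl never.

Lemma eps_seq_cons a l : eps_seq (a :: l) = eps a ++ eps_seq l.
Proof. by []. Qed.

Lemma eps_seq_cat l1 l2 : eps_seq (l1 ++ l2) = eps_seq l1 ++ eps_seq l2.
Proof. by rewrite /eps_seq map_cat flatten_cat. Qed.

Lemma eps_seq_comm a l : C (eps a ++ eps_seq l) (eps_seq l ++ eps a).
Proof.
elim: l => [|x l IH]; first by rewrite cats0.
by rewrite eps_seq_cons catA eps_comm -catA IH catA.
Qed.

Lemma eps_seq_absorb a l : a \in l -> C (eps a ++ eps_seq l) (eps_seq l).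
Proof.
elim: l => // x l IH; rewrite in_cons eps_seq_cons => /predU1P[->|Hal].
  by rewrite catA eps_idem.
by rewrite catA eps_comm -catA IH.
Qed.

Lemma eps_seq_undup l : C (eps_seq l) (eps_seq (undup l)).
Proof.
elim: l => [|x l IH] //=; rewrite eps_seq_cons.
by case: ifP => [Hxl|_]; rewrite ?eps_seq_cons IH // eps_seq_absorb // mem_undup.
Qed.

Lemma eps_seq_perm l1 l2 : perm_eq l1 l2 -> C (eps_seq l1) (eps_seq l2).
Proof.
elim: l1 l2 => [|x l1 IH] l2; first by rewrite perm_sym => /perm_nilP->.
move=> Hp; have Hx2 : x \in l2 by rewrite -(perm_mem Hp) mem_head.
move: Hp; case/splitPr: Hx2 => l2a l2b Hp.
rewrite eps_seq_cat !eps_seq_cons catA -eps_seq_comm -catA -eps_seq_cat.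
by rewrite (IH (l2a ++ l2b)) // -(perm_cons x) (perm_trans Hp) // -cat1s perm_catCA.
Qed.

Lemma eps_seq_eq_mem l1 l2 : l1 =i l2 -> C (eps_seq l1) (eps_seq l2).
Proof.
move=> Hl; rewrite eps_seq_undup [eps_seq l2]eps_seq_undup; apply: eps_seq_perm.
by apply: uniq_perm; rewrite ?undup_uniq // => x; rewrite !mem_undup.
Qed.

Definition eps_set (S : {set 'I_n}) : word := eps_seq (enum S).

Definition state := ({set 'I_n} * nat)%type.

Definition sem (st : state) : ptrans n :=
  [ffun x => if x \in st.1 then None else Some (iter st.2 (@gperm n) x)].

(* The point that [g^k] sends to [1] (the ordinal [0]). *)
Definition pre0 (k : nat) : 'I_n := inord ((n - k %% n) %% n).

Lemma pre0_spec (x : 'I_n) k : (x == pre0 k) = ((x + k) %% n == 0).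
Proof.
rewrite -val_eqE /= inordK ?ltn_pmod // -modnDmr.
have := ltn_ord x; have : k %% n < n by rewrite ltn_pmod.
move: (k %% n) (val x) => r y Hr Hy.
case: (posnP r) => [->|Hr0]; first by rewrite subn0 modnn addn0 modn_small.
rewrite [(n - r) %% n]modn_small; last by lia.
have [Hlt|Hge] := ltnP (y + r) n; first by rewrite modn_small //; apply/eqP/eqP; lia.
by rewrite -(subnK Hge) modnDr modn_small; [apply/eqP/eqP | ]; lia.
Qed.

Lemma pre0_eq (x : 'I_n) k : (x + k) %% n = 0 -> pre0 k = x.
Proof. by move=> Hx; apply/esym/eqP; rewrite pre0_spec Hx. Qed.

Lemma pre0_addK k : (pre0 k + k) %% n = 0.
Proof. by apply/eqP; rewrite -pre0_spec. Qed.

Lemma pre0_mod k k' : k = k' %[mod n] -> pre0 k = pre0 k'.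
Proof. by rewrite /pre0 => ->. Qed.

Definition step (st : state) (b : gen) : state :=
  match b with Gg => (st.1, st.2.+1) | Ge => (pre0 st.2 |: st.1, st.2) end.

Definition run : state -> word -> state := foldl step.

Definition st0 : state := (set0, 0).

Lemma run_cat st u v : run st (u ++ v) = run (run st u) v.
Proof. exact: foldl_cat. Qed.

Lemma run_gpow st a : run st (gpow a) = (st.1, st.2 + a).
Proof. by elim: a st => [|a IH] [S k] /=; rewrite ?addn0 // IH addSnnS. Qed.

Lemma run_subset (st : state) (w : word) : st.1 \subset (run st w).1.
Proof.
elim: w st => [|[] w IH] st /=; first exact: subxx.
- exact: (IH (_, _)).
- exact: subset_trans (subsetUr _ _) (IH (_, _)).
Qed.

Lemma pcompA (a b c : ptrans n) : pcomp a (pcomp b c) = pcomp (pcomp a b) c.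
Proof. by apply/ffunP => x; rewrite !ffunE; case: (a x) => //= y; rewrite ffunE. Qed.

Lemma pcomp_pid (a : ptrans n) : pcomp a (pid n) = a.
Proof. by apply/ffunP => x; rewrite !ffunE; case: (a x) => //= y; rewrite ffunE. Qed.

Lemma pcomp0 (a : ptrans n) : pcomp a [ffun => None] = [ffun => None].
Proof. by apply/ffunP => x; rewrite !ffunE; case: (a x) => //= y; rewrite ffunE. Qed.

Lemma pid_pcomp (a : ptrans n) : pcomp (pid n) a = a.
Proof. by apply/ffunP => x; rewrite !ffunE. Qed.

Lemma sem_step st b : pcomp (sem st) (phi n b) = sem (step st b).
Proof.
apply/ffunP => x; case: st => S k; case: b; rewrite !ffunE /=.
  by case: (x \in S) => //=; rewrite ffunE.
rewrite in_setU1; case: (x \in S); first by rewrite orbT.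
by rewrite orbF /= ffunE pre0_spec -(gperm_iter_val k x).
Qed.

Lemma ev_run w st : pcomp (sem st) (ev n w) = sem (run st w).
Proof.
elim: w st => [|b w IH] st /=; first exact: pcomp_pid.
by rewrite pcompA sem_step IH.
Qed.

Lemma ev_sem w : ev n w = sem (run st0 w).
Proof.
rewrite -ev_run (_ : sem st0 = pid n) ?pid_pcomp //.
by apply/ffunP => x; rewrite !ffunE in_set0.
Qed.

Lemma ev_cat u v : ev n (u ++ v) = pcomp (ev n u) (ev n v).
Proof. by elim: u => [|b u IH] /=; rewrite ?pid_pcomp // IH pcompA. Qed.

Lemma sem_mod S k k' : k = k' %[mod n] -> sem (S, k) = sem (S, k').
Proof.
move=> Hk; apply/ffunP => x; rewrite !ffunE /=; case: ifP => // _.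
by congr Some; apply: val_inj; rewrite !gperm_iter_val -modnDmr Hk modnDmr.
Qed.

Lemma in_CIn_sem st : in_CIn (sem st).
Proof.
split; last by exists st.2 => x; rewrite ffunE; case: ifP; [left | right].
move=> x y z; rewrite !ffunE; case: ifP => // _ [<-]; case: ifP => // _ [] Hxy.
apply: val_inj; move: (congr1 val Hxy); rewrite !gperm_iter_val => /eqP.
by rewrite eqn_modDr => /eqP; rewrite !modn_small.
Qed.

Lemma run_eg_pow j (st : state) (x : 'I_n) :
  (x + st.2) %% n < j -> x \in (run st (eg_pow j)).1.
Proof.
elim: j st => // j IH st Hj.
rewrite [eg_pow _]/= run_cat /= run_gpow /=.
have [Hx0|Hx0] := eqVneq ((x + st.2) %% n) 0.
  by apply: (subsetP (run_subset _ _)); rewrite /= in_setU1 pre0_spec Hx0 eqxx.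
apply: IH => /=; rewrite addnA -modnDml.
have := ltn_pmod (x + st.2) (ltn0Sn m).
move: Hj Hx0; move: ((x + st.2) %% n) => r Hj Hr0 Hr.
by rewrite (_ : r + (n - 1) = r.-1 + n) ?modnDr ?modn_small; lia.
Qed.

Lemma ev_eg_pow_n : ev n (eg_pow n) = [ffun => None].
Proof.
rewrite ev_sem; apply/ffunP => x.
by rewrite !ffunE run_eg_pow ?ltn_pmod.
Qed.

Lemma rel_sound x y : (x, y) \in Qrels n -> ev n x = ev n y.
Proof.
rewrite (mem_cat _ (Q1 n)) (mem_cat _ Q2) (mem_cat _ (Q3 n)) => /or4P[].
- rewrite mem_seq1 => /eqP[-> ->]; change (Gg :: gpow m) with (gpow n).
  by rewrite !ev_sem run_gpow; apply: sem_mod; rewrite modnn.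
- by rewrite mem_seq1 => /eqP[-> ->]; rewrite !ev_sem /= setUA setUid.
- case/allpairsPdep=> j [i [Hj Hi [-> ->]]].
  move: Hj Hi; rewrite !mem_iota => Hj Hi.
  rewrite !ev_sem !run_cat /= !run_gpow /= !run_cat !run_gpow /= run_gpow /=.
  rewrite (@pre0_mod (0 + (n - j + i) + (n - i + j)) 0) 1?setUCA //.
  by apply: (@eq_mod_addM _ _ _ 2); lia.
- rewrite mem_seq1 => /eqP[-> ->].
  change (ev n ([:: Gg] ++ eg_pow n) = ev n (eg_pow n)).
  by rewrite ev_cat ev_eg_pow_n pcomp0.
Qed.

Lemma congr_sound u v : C u v -> ev n u = ev n v.
Proof.
elim=> [u0 x y v0 /In_mem Hxy|w|w1 w2 _ IH|w1 w2 w3 _ IH1 _ IH2] //.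
- by rewrite !ev_cat (rel_sound Hxy).
- by rewrite IH1.
Qed.

Lemma run_eps (st : state) a : st.2 %% n = 0 -> run st (eps a) = (a |: st.1, st.2 + n).
Proof.
move=> Hk; have Ha := ltnW (ltn_ord a).
rewrite run_cat run_gpow /= run_gpow /= -addnA subnK // (@pre0_eq a) //.
by rewrite addnCA subnKC // modnDr.
Qed.

Lemma run_eps_seq l (st : state) : st.2 %% n = 0 ->
  run st (eps_seq l) = ([set x in l] :|: st.1, st.2 + n * size l).
Proof.
elim: l st => [|a l IH] [S k] /= Hk.
  by rewrite muln0 addn0; congr pair; apply/setP => x; rewrite !inE.
rewrite eps_seq_cons run_cat run_eps // IH /= ?modnDr //; congr pair.
- by apply/setP => x; rewrite !inE orbCA orbA.
- by rewrite mulnS addnA.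
Qed.

Lemma ev_surj a : in_CIn a -> exists w, ev n w = a.
Proof.
case=> _ [k Hk]; exists (eps_set [set x | a x == None] ++ gpow k).
rewrite ev_sem run_cat run_eps_seq // run_gpow /= (@sem_mod _ _ k); last first.
  by rewrite add0n mulnC modnMDl.
by apply/ffunP => x; rewrite !ffunE /= setU0 !inE mem_enum inE; case: (Hk x) => ->.
Qed.

Definition nf (st : state) : word := eps_set st.1 ++ gpow st.2.

Lemma gpow_e_eps k : C (gpow k ++ [:: Ge]) (eps (pre0 k) ++ gpow k).
Proof.
have Hp := pre0_addK k; have Hpn := ltnW (ltn_ord (pre0 k)).
rewrite /eps -catA /= -gpowD (@gpow_mod (pre0 k + k) 0) ?Hp //.
rewrite (@gpow_mod (n - pre0 k) k) //; apply/eqP.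
by rewrite -(eqn_modDl (pre0 k)) subnKC // modnn Hp.
Qed.

Lemma eps_seq1 a : eps_seq [:: a] = eps a.
Proof. exact: cats0. Qed.

Lemma eps_set_setU1 S a : C (eps_set S ++ eps a) (eps_set (a |: S)).
Proof.
rewrite -eps_seq1 -eps_seq_cat; apply: eps_seq_eq_mem => x.
by rewrite mem_cat !mem_enum mem_seq1 in_setU1 orbC.
Qed.

Lemma nf_step st b : C (nf st ++ [:: b]) (nf (step st b)).
Proof.
case: st => S k; case: b; rewrite /nf /= -catA.
- by rewrite -[[:: Gg]]/(gpow 1) -gpowD addn1.
- by rewrite gpow_e_eps catA eps_set_setU1.
Qed.

Lemma nf_run w st : C (nf st ++ w) (nf (run st w)).
Proof.
elim: w st => [|b w IH] st /=; first by rewrite cats0.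
by rewrite -cat1s catA nf_step IH.
Qed.

Lemma word_nf w : C w (nf (run st0 w)).
Proof. by have := nf_run w st0; rewrite /nf /eps_set enum_set0. Qed.

Lemma eg_pow_eps j : j <= n ->
  C (eg_pow j) (eps_seq [seq inord i | i <- iota 0 j] ++ gpow (n - j)).
Proof.
elim: j => [|j IH] Hj; first by rewrite subn0 gpow_n.
rewrite -[j.+1]addn1 /eg_pow nseqD flatten_cat /= cats0 -/(eg_pow j) IH 1?ltnW //.
rewrite iotaD map_cat eps_seq_cat /= eps_seq1 /eps inordK // add0n.
have -> : gpow (n - 1) = gpow j ++ gpow (n - (j + 1)) by rewrite -gpowD; congr gpow; lia.
by rewrite -!catA.
Qed.

Lemma g_eps_full : C (Gg :: eps_set setT) (eps_set setT).
Proof.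
have eg_pow_full : C (eg_pow n) (eps_set setT).
  rewrite eg_pow_eps // subnn cats0; apply: eps_seq_eq_mem => x.
  rewrite mem_enum in_setT; apply/mapP; exists (val x); last by rewrite inord_val.
  by rewrite mem_iota /=.
by rewrite -eg_pow_full g_eg_pow.
Qed.

Lemma gpow_pred_g : C (gpow (n - 1) ++ [:: Gg]) [::].
Proof. by rewrite -[[:: Gg]]/(gpow 1) -gpowD subnK // gpow_n. Qed.

Lemma g_gpow_pred : C (Gg :: gpow (n - 1)) [::].
Proof. rewrite subn1; exact: gpow_n. Qed.

Lemma conj_eps a : C (gpow (n - 1) ++ eps a ++ [:: Gg]) (eps (gperm a)).
Proof.
have Ha := ltn_ord a.
have Hmod : n - 1 + (n - a) = n - a.+1 %% n %[mod n].
  have [Hlt|Hge] := ltnP a.+1 n.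
    by rewrite [a.+1 %% n]modn_small //; apply: (@eq_mod_addM _ _ _ 1); lia.
  by rewrite (_ : n - 1 + (n - a) = n) 1?(_ : a.+1 = n) ?modnn //; lia.
rewrite /eps -!catA /= catA -gpowD -[[:: Gg]]/(gpow 1) -gpowD addn1.
by rewrite (gpow_mod Hmod) (@gpow_mod (a.+1 %% n) a.+1) ?modn_mod.
Qed.

Lemma conj_eps_seq l :
  C (gpow (n - 1) ++ eps_seq l ++ [:: Gg]) (eps_seq (map (@gperm n) l)).
Proof.
elim: l => [|a l IH]; first exact: gpow_pred_g.
rewrite /= !eps_seq_cons -IH -conj_eps.
by rewrite -!catA [[:: Gg] ++ _]catA cat1s g_gpow_pred.
Qed.

Lemma eps_full_gpow k : C (eps_set setT ++ gpow k) (eps_set setT).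
Proof.
have eps_full_g : C (eps_set setT ++ [:: Gg]) (eps_set setT).
  transitivity (Gg :: (gpow (n - 1) ++ eps_set setT ++ [:: Gg])).
    by rewrite -[Gg :: (_ ++ _)]cat_cons g_gpow_pred.
  rewrite conj_eps_seq -[X in C _ X]g_eps_full (@eps_seq_eq_mem _ (enum setT)) //.
  move=> x; rewrite mem_enum in_setT; apply/mapP; exists (ord_pred x).
    by rewrite mem_enum in_setT.
  by rewrite /gperm ord_predK.
elim: k => [|k IH]; first by rewrite cats0.
by rewrite -[gpow k.+1]/([:: Gg] ++ gpow k) catA eps_full_g.
Qed.

Lemma nf_sem_inj st st' : sem st = sem st' -> C (nf st) (nf st').
Proof.
case: st st' => [S k] [S' k'] Hsem.
have Hval x : sem (S, k) x = sem (S', k') x by rewrite Hsem.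
have HS : S' = S.
  by apply/setP => x; move: (Hval x); rewrite !ffunE /=; do 2!case: (_ \in _).
subst S'.
rewrite /nf /=; case: (pickP [pred x | x \notin S]) => [x /= HxS|HS].
  move: (Hval x); rewrite !ffunE /= (negbTE HxS) => -[Hx].
  move: (congr1 val Hx); rewrite !gperm_iter_val => /eqP.
  by rewrite eqn_modDl => /eqP/gpow_mod->.
have -> : S = setT by apply/setP => x; move: (HS x); rewrite /= in_setT => /negbFE.
by rewrite !eps_full_gpow.
Qed.

Lemma presentation_CIn : is_presentation n (Qrels n).
Proof.
split; [|split; [|split]].
- by case; case=> // /(congr1 (fun a : ptrans n => a ord0)); rewrite !ffunE.
- by move=> w; rewrite ev_sem; apply: in_CIn_sem.
- exact: ev_surj.
- move=> u v; split; last exact: congr_sound.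
  by rewrite !ev_sem => /nf_sem_inj; rewrite -!word_nf.
Qed.

Lemma size_Qrels : (size (Qrels n)).*2 = n ^ 2 - n + 6.
Proof.
have sum_pred k : (sumn (map predn (iota 1 k))).*2 = k * k - k.
  elim: k => // k IH; rewrite -[k.+1]addn1 iotaD map_cat sumn_cat /= doubleD IH.
  by rewrite -!mul2n; nia.
rewrite /Qrels (size_cat (Q1 n)) (size_cat Q2) (size_cat (Q3 n)) /Q3.
rewrite size_allpairs_dep (@eq_map _ _ _ predn) => [|j]; last by rewrite size_iota.
move: (sumn _) (sum_pred n) => s Hs.
rewrite -[size (Q1 n)]/1 -[size Q2]/1 -[size (Q4 n)]/1; nia.
Qed.

End Presentation.

Theorem theorem2p7 (n : nat) : 1 <= n ->
  is_presentation n (Qrels n) /\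
  size [:: Gg; Ge] = 2 /\
  (size (Qrels n)).*2 = n ^ 2 - n + 6.
Proof.
by case: n => // m _; split; [exact: presentation_CIn | split; last exact: size_Qrels].
Qed.
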